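(* Let $a,b,c>0$. Let $B(a,b,c)$ denote the semi-infinite real symmetric matrix indexed by $j,k\in\mathbb{Z}_{+}=\{0,1,2,\ldots\}$ with entries \[ B(a,b,c)_{j,k}=\frac{\Gamma(j+k+a)}{\Gamma(j+k+b+c)}\sqrt{\frac{\Gamma(j+b)\Gamma(j+c)\Gamma(k+b)\Gamma(k+c)}{\Gamma(j+a)\,j!\,\Gamma(k+a)\,k!}}. \] Let $A$ be the semi-infinite matrix indexed by $\mathbb{Z}_{+}$ with entries $A_{2j,2k}=B(a,b,c)_{j,k}$, $A_{2j+1,2k+1}=B(a+1,b+1,c)_{j,k}$ for $j,k\in\mathbb{Z}_{+}$, and $A_{j,k}=0$ whenever $j,k$ have different parity. Let $D$ be the semi-infinite matrix with $D_{j,j+1}=-D_{j+1,j}=d(j)$ for $j\in\mathbb{Z}_{+}$ and $D_{j,k}=0$ otherwise, where \[ d(2j)=\sqrt{(j+a)(j+b)},\qquad d(2j+1)=\sqrt{(j+1)(j+c)},\qquad j\in\mathbb{Z}_{+}. \] Then $A$ and $D$ commute, i.e. $AD=DA$ (the matrix products being well defined entrywise since $D$ has finitely many nonzero entries in each row and column).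
   Context: $\Gamma$ is Euler's Gamma function. $A$ corresponds to the direct sum $B(a,b,c)\oplus B(a+1,b+1,c)$ with respect to the decomposition $\ell^2(\mathbb{Z}_+)=\ell^2(2\mathbb{Z}_+)\oplus\ell^2(2\mathbb{Z}_++1)$. *)

From Stdlib Require Import Reals Lra Arith Bool.
From Coquelicot Require Import Coquelicot.
Open Scope R_scope.
Open Scope bool_scope.

Definition Gamma (x : R) : R :=
  RInt_gen (fun t => Rpower t (x - 1) * exp (- t)) (at_right 0) (Rbar_locally p_infty).

Definition smat := nat -> nat -> R.

Definition smat_mul (A B : smat) : smat :=
  fun j k => Series (fun l => A j l * B l k).

Definition Bmat (a b c : R) : smat := fun j k =>
  Gamma (INR j + INR k + a) / Gamma (INR j + INR k + b + c) *
  sqrt ((Gamma (INR j + b) * Gamma (INR j + c) * Gamma (INR k + b) * Gamma (INR k + c)) /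
        (Gamma (INR j + a) * INR (fact j) * Gamma (INR k + a) * INR (fact k))).

Definition Amat (a b c : R) : smat := fun j k =>
  if Nat.even j && Nat.even k then Bmat a b c (Nat.div2 j) (Nat.div2 k)
  else if Nat.odd j && Nat.odd k then Bmat (a + 1) (b + 1) c (Nat.div2 j) (Nat.div2 k)
  else 0.

Definition dcoef (a b c : R) (n : nat) : R :=
  let j := INR (Nat.div2 n) in
  if Nat.even n then sqrt ((j + a) * (j + b)) else sqrt ((j + 1) * (j + c)).

Definition Dmat (a b c : R) : smat := fun j k =>
  if Nat.eqb k (S j) then dcoef a b c j
  else if Nat.eqb j (S k) then - dcoef a b c k
  else 0.

From Stdlib Require Import Reals Lra Lia Arith.
From Coquelicot Require Import Coquelicot.
Open Scope R_scope.

(* Write [B(a,b,c)_{m,n} = H(m+n) sqrt (w(m) w(n))] with [H(s) = Gamma(s+a)/Gamma(s+b+c)] and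
   [w(n) = Gamma(n+b) Gamma(n+c) / (Gamma(n+a) n!)].  The recurrence [Gamma(x+1) = x Gamma(x)]
   turns the shifts [n -> n+1] and [(a,b) -> (a+1,b+1)] of [H] and [w] into rational factors,
   so the four terms of the entry [(2m, 2n+1)] of [AD - DA] are rational multiples of a single
   quantity, and the multipliers cancel.  Entries with rows and columns of equal parity vanish
   because [A] preserves parity and [D] reverses it; the entries [(2m+1, 2n)] follow from the
   entries [(2n, 2m+1)] since [A] is symmetric and [D] antisymmetric.  The recurrence for Gamma
   is integration by parts in its defining integral, which converges by comparison with an
   integrand whose primitive is explicit and bounded. *)

(** * Improper integrals on (0, +oo) *)

Lemma at_right_0_pos : at_right 0 (fun t => 0 < t).
Proof. unfold at_right, within. now apply filter_forall. Qed.

Lemma at_right_0_ln_lt (L : R) : at_right 0 (fun t => 0 < t /\ ln t < L).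
Proof.
  apply (filter_and _ _ at_right_0_pos).
  exact (is_lim_ln_0 (fun y => y < L) (ex_intro _ L (fun y Hy => Hy))).
Qed.

Lemma filter_prod_pos :
  filter_prod (at_right 0) (Rbar_locally p_infty) (fun ab => 0 < fst ab /\ 0 < snd ab).
Proof.
  apply (Filter_prod _ _ _ (fun t => 0 < t) (fun t => 0 < t)); [exact at_right_0_pos| |easy].
  now exists 0.
Qed.

Lemma filter_prod_pos_between :
  filter_prod (at_right 0) (Rbar_locally p_infty)
    (fun ab => forall t, Rmin (fst ab) (snd ab) <= t -> 0 < t).
Proof.
  generalize filter_prod_pos. apply filter_imp. intros [u v] [Hu Hv] t Ht; cbn [fst snd] in *.
  assert (0 < Rmin u v) by (apply Rmin_glb_lt; lra). lra.
Qed.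

Lemma filterlim_exp_m_infty {T} {F : (T -> Prop) -> Prop} {FF : Filter F} (h : T -> R) :
  (forall L, F (fun t => h t < L)) -> filterlim (fun t => exp (h t)) F (locally 0).
Proof.
  intros Hh. apply (filterlim_comp _ _ _ h exp _ (Rbar_locally m_infty)); [|exact is_lim_exp_m].
  intros P [L HL]. unfold filtermap. generalize (Hh L). apply filter_imp. exact (fun t => HL (h t)).
Qed.

Lemma ex_RInt_pos (f : R -> R) (u v : R) :
  (forall t, 0 < t -> continuous f t) -> 0 < u -> 0 < v -> ex_RInt f u v.
Proof.
  intros Hf Hu Hv. apply (ex_RInt_continuous (V:=R_CompleteNormedModule)).
  intros z Hz. apply Hf. assert (0 < Rmin u v) by (apply Rmin_glb_lt; lra). lra.
Qed.

Section Dominated.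

Variables (f g G : R -> R) (l0 l1 : R).
Hypothesis f_cont : forall t, 0 < t -> continuous f t.
Hypothesis g_cont : forall t, 0 < t -> continuous g t.
Hypothesis f_dominated : forall t, 0 < t -> 0 <= f t <= g t.
Hypothesis G_derive : forall t, 0 < t -> is_derive G t (g t).
Hypothesis G_lim_0 : filterlim G (at_right 0) (locally l0).
Hypothesis G_lim_infty : filterlim G (Rbar_locally p_infty) (locally l1).

Lemma RInt_dominated_le (u v : R) : 0 < u -> u <= v -> 0 <= RInt f u v <= G v - G u.
Proof.
  intros Hu Huv.
  assert (Hg : RInt g u v = G v - G u).
  { apply is_RInt_unique, (is_RInt_derive (V:=R_CompleteNormedModule)); intros t Ht;
      [apply G_derive | apply g_cont]; rewrite Rmin_left in Ht; lra. }
  rewrite <- Hg. split.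
  - apply RInt_ge_0; [lra|apply ex_RInt_pos; auto; lra|].
    intros t Ht. apply f_dominated. lra.
  - apply RInt_le; [lra|apply ex_RInt_pos; auto; lra|apply ex_RInt_pos; auto; lra|].
    intros t Ht. apply f_dominated. lra.
Qed.

Lemma Rabs_RInt_dominated (u v : R) : 0 < u -> 0 < v -> Rabs (RInt f u v) <= Rabs (G v - G u).
Proof.
  intros Hu Hv. destruct (Rle_dec u v) as [Huv|Hvu].
  - destruct (RInt_dominated_le u v Hu Huv). rewrite !Rabs_pos_eq; lra.
  - destruct (RInt_dominated_le v u Hv ltac:(lra)).
    rewrite <- opp_RInt_swap by (apply ex_RInt_pos; auto).
    rewrite Rabs_minus_sym. change (Rabs (- RInt f v u) <= Rabs (G u - G v)).
    rewrite Rabs_Ropp, !Rabs_pos_eq; lra.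
Qed.

Lemma RInt_dominated_cauchy (u1 v1 u2 v2 e : R) :
  0 < u1 -> 0 < v1 -> 0 < u2 -> 0 < v2 ->
  Rabs (G u1 - l0) < e -> Rabs (G u2 - l0) < e ->
  Rabs (G v1 - l1) < e -> Rabs (G v2 - l1) < e ->
  Rabs (RInt f u2 v2 - RInt f u1 v1) < 4 * e.
Proof.
  intros Hu1 Hv1 Hu2 Hv2 Gu1 Gu2 Gv1 Gv2.
  rewrite <- (RInt_Chasles (V:=R_CompleteNormedModule) f u2 u1 v2)
    by (apply ex_RInt_pos; auto).
  rewrite <- (RInt_Chasles (V:=R_CompleteNormedModule) f u1 v1 v2)
    by (apply ex_RInt_pos; auto).
  change (Rabs (RInt f u2 u1 + (RInt f u1 v1 + RInt f v1 v2) - RInt f u1 v1) < 4 * e).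
  replace (RInt f u2 u1 + (RInt f u1 v1 + RInt f v1 v2) - RInt f u1 v1)
    with (RInt f u2 u1 + RInt f v1 v2) by ring.
  pose proof (Rabs_triang (RInt f u2 u1) (RInt f v1 v2)).
  pose proof (Rabs_RInt_dominated u2 u1 Hu2 Hu1).
  pose proof (Rabs_RInt_dominated v1 v2 Hv1 Hv2).
  pose proof (Rabs_triang (G u1 - l0) (l0 - G u2)).
  pose proof (Rabs_triang (G v2 - l1) (l1 - G v1)).
  rewrite Rabs_minus_sym in Gu2, Gv1.
  replace (G u1 - l0 + (l0 - G u2)) with (G u1 - G u2) in * by ring.
  replace (G v2 - l1 + (l1 - G v1)) with (G v2 - G v1) in * by ring.
  lra.
Qed.

Lemma ex_RInt_gen_dominated : ex_RInt_gen f (at_right 0) (Rbar_locally p_infty).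
Proof.
  destruct (proj1 (filterlim_locally_cauchy (U:=R_CompleteSpace)
      (F:=filter_prod (at_right 0) (Rbar_locally p_infty))
      (fun ab => RInt f (fst ab) (snd ab)))) as [l Hl].
  - intros eps.
    assert (He : 0 < eps / 4) by (destruct eps; simpl; lra).
    exists (fun ab => (0 < fst ab /\ Rabs (G (fst ab) - l0) < eps / 4)
                 /\ (0 < snd ab /\ Rabs (G (snd ab) - l1) < eps / 4)).
    split.
    + apply (Filter_prod _ _ _ _ _
        (filter_and _ _ at_right_0_pos
           (proj1 (filterlim_locally G l0) G_lim_0 (mkposreal _ He)))
        (filter_and _ _ (ex_intro _ 0 (fun t Ht => Ht))
           (proj1 (filterlim_locally G l1) G_lim_infty (mkposreal _ He)))).
      now intros u v Hu Hv.
    + intros [u1 v1] [u2 v2] [[Hu1 Gu1] [Hv1 Gv1]] [[Hu2 Gu2] [Hv2 Gv2]].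
      change (Rabs (RInt f u2 v2 - RInt f u1 v1) < eps).
      replace (pos eps) with (4 * (eps / 4)) by field.
      now apply RInt_dominated_cauchy.
  - exists l. apply (filterlimi_lim_ext_loc (fun ab => RInt f (fst ab) (snd ab))); [|exact Hl].
    generalize filter_prod_pos. apply filter_imp. intros [u v] [Hu Hv].
    apply (RInt_correct (V:=R_CompleteNormedModule)), ex_RInt_pos; auto.
Qed.

End Dominated.

(** * Euler's Gamma function *)

Lemma ln_le_tangent (y t : R) : 0 < y -> 0 < t -> y * ln t <= y * ln (2 * y) - y + t / 2.
Proof.
  intros Hy Ht.
  assert (Hu : 0 < t / (2 * y)) by (apply Rdiv_lt_0_compat; lra).
  assert (Hln : ln (t / (2 * y)) <= t / (2 * y) - 1).
  { pose proof (exp_ineq1_le (ln (t / (2 * y)))). rewrite exp_ln in H by lra. lra. }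
  replace t with (2 * y * (t / (2 * y))) at 1 by (field; lra).
  rewrite ln_mult by lra.
  apply (Rmult_le_compat_l y) in Hln; [|lra].
  replace (y * (t / (2 * y) - 1)) with (t / 2 - y) in Hln by (field; lra).
  lra.
Qed.

Lemma ln_sub_ln_succ_lim_infty :
  filterlim (fun t => ln t - ln (1 + t)) (Rbar_locally p_infty) (locally 0).
Proof.
  apply (filterlim_ext_loc (fun t => - ln (1 + / t))).
  { exists 0. intros t Ht.
    assert (0 < / t) by (apply Rinv_0_lt_compat; lra).
    replace (1 + t) with (t * (1 + / t)) by (field; lra).
    rewrite ln_mult by lra. ring. }
  apply (filterlim_comp _ _ _ Rinv (fun y => - ln (1 + y)) _ (locally 0)).
  - exact (filterlim_Rbar_inv p_infty ltac:(discriminate)).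
  - replace 0 with (- ln (1 + 0)) at 2 by (rewrite Rplus_0_r, ln_1; ring).
    apply (ex_derive_continuous (fun y => - ln (1 + y))). auto_derive. lra.
Qed.

Definition gamma_density (x t : R) : R := exp ((x - 1) * ln t - t).

Lemma gamma_density_continuous (x t : R) : 0 < t -> continuous (gamma_density x) t.
Proof.
  intros Ht. apply (ex_derive_continuous (gamma_density x)). unfold gamma_density.
  auto_derive. lra.
Qed.

(* With [C = exp (gamma_majorant_const x)], [ln_le_tangent] gives
   [t^(x-1) e^(-t) <= C t^(x-1) (1+t)^(-x-1)], and the right-hand side has the bounded
   primitive [C/x (t/(1+t))^x]. *)
Definition gamma_majorant_const (x : R) : R := (x + 1) * ln (2 * (x + 1)).

Definition gamma_majorant (x t : R) : R :=
  exp ((x - 1) * ln t - (x + 1) * ln (1 + t) + gamma_majorant_const x).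

Definition gamma_majorant_primitive (x t : R) : R :=
  exp (x * (ln t - ln (1 + t)) + gamma_majorant_const x - ln x).

Definition power_exp (x t : R) : R := exp (x * ln t - t).

Section GammaIntegral.

Variable x : R.
Hypothesis x_pos : 0 < x.

Lemma gamma_density_le_majorant (t : R) : 0 < t -> gamma_density x t <= gamma_majorant x t.
Proof.
  intros Ht. unfold gamma_density, gamma_majorant, gamma_majorant_const.
  apply Rlt_le, exp_increasing.
  pose proof (ln_le_tangent (x + 1) (1 + t) ltac:(lra) ltac:(lra)). lra.
Qed.

Lemma gamma_majorant_continuous (t : R) : 0 < t -> continuous (gamma_majorant x) t.
Proof.
  intros Ht. apply (ex_derive_continuous (gamma_majorant x)). unfold gamma_majorant.
  auto_derive. lra.
Qed.

Lemma is_derive_gamma_majorant_primitive (t : R) :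
  0 < t -> is_derive (gamma_majorant_primitive x) t (gamma_majorant x t).
Proof.
  intros Ht.
  assert (E : gamma_majorant x t = gamma_majorant_primitive x t * x / (t * (1 + t))).
  { unfold gamma_majorant, gamma_majorant_primitive.
    replace ((x - 1) * ln t - (x + 1) * ln (1 + t) + gamma_majorant_const x) with
      ((x * (ln t - ln (1 + t)) + gamma_majorant_const x - ln x) + ln x - ln t - ln (1 + t))
      by ring.
    unfold Rminus at 1 2. rewrite !exp_plus, !exp_Ropp, !exp_ln by lra.
    field. lra. }
  rewrite E. unfold gamma_majorant_primitive. auto_derive; [repeat split; lra|].
  unfold Rminus. field. lra.
Qed.

Lemma gamma_majorant_primitive_lim_0 :
  filterlim (gamma_majorant_primitive x) (at_right 0) (locally 0).
Proof.
  apply filterlim_exp_m_infty. intros L.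
  generalize (at_right_0_ln_lt ((L - gamma_majorant_const x + ln x) / x)).
  apply filter_imp. intros t [Ht Hlt].
  assert (0 <= ln (1 + t)) by (rewrite <- ln_1; apply ln_le; lra).
  apply (Rmult_lt_compat_l x) in Hlt; [|lra].
  replace (x * ((L - gamma_majorant_const x + ln x) / x))
    with (L - gamma_majorant_const x + ln x) in Hlt by (field; lra).
  nra.
Qed.

Lemma gamma_majorant_primitive_lim_infty :
  filterlim (gamma_majorant_primitive x) (Rbar_locally p_infty)
    (locally (exp (gamma_majorant_const x - ln x))).
Proof.
  apply (filterlim_comp _ _ _ (fun t => ln t - ln (1 + t))
           (fun s => exp (x * s + gamma_majorant_const x - ln x)) _ (locally 0)).
  - exact ln_sub_ln_succ_lim_infty.
  - replace (gamma_majorant_const x - ln x) with (x * 0 + gamma_majorant_const x - ln x)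
      at 1 by ring.
    apply (ex_derive_continuous (fun s => exp (x * s + gamma_majorant_const x - ln x))).
    auto_derive. easy.
Qed.

Lemma is_RInt_gen_Gamma :
  is_RInt_gen (gamma_density x) (at_right 0) (Rbar_locally p_infty) (Gamma x).
Proof.
  assert (Hex := ex_RInt_gen_dominated (gamma_density x) (gamma_majorant x)
    (gamma_majorant_primitive x) 0 (exp (gamma_majorant_const x - ln x))
    (gamma_density_continuous x) gamma_majorant_continuous
    (fun t Ht => conj (Rlt_le _ _ (exp_pos _)) (gamma_density_le_majorant t Ht))
    is_derive_gamma_majorant_primitive gamma_majorant_primitive_lim_0
    gamma_majorant_primitive_lim_infty).
  replace (Gamma x) with (RInt_gen (gamma_density x) (at_right 0) (Rbar_locally p_infty)).
  - now apply (RInt_gen_correct (V:=R_CompleteNormedModule)).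
  - unfold Gamma. apply RInt_gen_ext_eq; [|exact Hex].
    intros t. unfold gamma_density, Rpower. rewrite <- exp_plus. reflexivity.
Qed.

Lemma is_derive_power_exp (t : R) :
  0 < t -> is_derive (power_exp x) t (x * gamma_density x t - gamma_density (x + 1) t).
Proof.
  intros Ht. unfold gamma_density. replace (x + 1 - 1) with x by ring.
  assert (E : exp ((x - 1) * ln t - t) = power_exp x t / t).
  { unfold power_exp. replace (x * ln t - t) with ((x - 1) * ln t - t + ln t) by ring.
    rewrite exp_plus, exp_ln by lra. field. lra. }
  rewrite E. unfold power_exp. auto_derive; [lra|]. unfold Rminus. field. lra.
Qed.

Lemma power_exp_lim_0 : filterlim (power_exp x) (at_right 0) (locally 0).
Proof.
  apply filterlim_exp_m_infty. intros L.
  generalize (at_right_0_ln_lt (L / x)). apply filter_imp. intros t [Ht Hlt].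
  apply (Rmult_lt_compat_l x) in Hlt; [|lra].
  replace (x * (L / x)) with L in Hlt by (field; lra).
  lra.
Qed.

Lemma power_exp_lim_infty : filterlim (power_exp x) (Rbar_locally p_infty) (locally 0).
Proof.
  apply filterlim_exp_m_infty. intros L.
  exists (Rmax 0 (2 * (x * ln (2 * x) - x - L))). intros t Ht.
  pose proof (Rle_lt_trans _ _ _ (Rmax_l _ _) Ht).
  pose proof (Rle_lt_trans _ _ _ (Rmax_r _ _) Ht).
  pose proof (ln_le_tangent x t x_pos ltac:(lra)).
  lra.
Qed.

Lemma is_RInt_gen_Gamma_parts :
  is_RInt_gen (fun t => x * gamma_density x t - gamma_density (x + 1) t)
    (at_right 0) (Rbar_locally p_infty) 0.
Proof.
  apply (is_RInt_gen_ext (Derive (power_exp x))).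
  - generalize filter_prod_pos_between. apply filter_imp. intros ab Hab t Ht.
    apply is_derive_unique, is_derive_power_exp, Hab. lra.
  - rewrite <- (Rminus_diag 0) at 2. apply is_RInt_gen_Derive.
    + generalize filter_prod_pos_between. apply filter_imp. intros ab Hab t Ht.
      eexists. apply is_derive_power_exp, Hab. lra.
    + generalize filter_prod_pos_between. apply filter_imp. intros ab Hab t Ht.
      assert (Ht0 : 0 < t) by (apply Hab; lra).
      apply (continuous_ext_loc _ (fun s => x * gamma_density x s - gamma_density (x + 1) s)).
      * exists (mkposreal t Ht0). intros s Hs. change (Rabs (s - t) < t) in Hs.
        apply Rabs_def2 in Hs. symmetry. apply is_derive_unique, is_derive_power_exp. lra.
      * apply (continuous_minus (V:=R_NormedModule)).
        -- apply (continuous_scal_r (V:=R_NormedModule) x (gamma_density x)).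
           now apply gamma_density_continuous.
        -- now apply gamma_density_continuous.
    + exact power_exp_lim_0.
    + exact power_exp_lim_infty.
Qed.

End GammaIntegral.

Lemma Gamma_succ (x : R) : 0 < x -> Gamma (x + 1) = x * Gamma x.
Proof.
  intros Hx.
  assert (H := is_RInt_gen_minus _ _ _ _
    (is_RInt_gen_scal _ x _ (is_RInt_gen_Gamma x Hx)) (is_RInt_gen_Gamma_parts x Hx)).
  apply (is_RInt_gen_ext _ (gamma_density (x + 1))) in H.
  2: { apply filter_forall. intros ab t _. change (x * gamma_density x t -
         (x * gamma_density x t - gamma_density (x + 1) t) = gamma_density (x + 1) t). ring. }
  apply (is_RInt_gen_unique (V:=R_CompleteNormedModule)) in H.
  transitivity (RInt_gen (gamma_density (x + 1)) (at_right 0) (Rbar_locally p_infty)).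
  - symmetry. apply (is_RInt_gen_unique (V:=R_CompleteNormedModule)), is_RInt_gen_Gamma. lra.
  - rewrite H. change (x * Gamma x - 0 = x * Gamma x). ring.
Qed.

(** * The products [AD] and [DA] *)

Lemma sum_n_indicator (p : nat) (v : R) (n : nat) :
  sum_n (fun l => if Nat.eqb l p then v else 0) n = if Nat.leb p n then v else 0.
Proof.
  induction n as [|n IH].
  - rewrite sum_O. now destruct p.
  - rewrite sum_Sn, IH.
    destruct (Nat.eqb_spec (S n) p), (Nat.leb_spec p n), (Nat.leb_spec p (S n));
      try lia; cbn; ring.
Qed.

Lemma is_series_indicator (p : nat) (v : R) :
  is_series (fun l => if Nat.eqb l p then v else 0) v.
Proof.
  apply (filterlim_ext_loc (fun _ => v)); [|apply filterlim_const].
  exists p. intros n Hn. rewrite sum_n_indicator.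
  now rewrite (proj2 (Nat.leb_le p n) Hn).
Qed.

Lemma Series_two_points (u : nat -> R) (p q : nat) (v w : R) :
  (forall l, u l = (if Nat.eqb l p then v else 0) + (if Nat.eqb l q then w else 0)) ->
  Series u = v + w.
Proof.
  intros Hu. apply is_series_unique.
  apply (is_series_ext _ _ _ (fun l => eq_sym (Hu l))).
  exact (is_series_plus _ _ _ _ (is_series_indicator p v) (is_series_indicator q w)).
Qed.

Lemma smat_mul_Dmat_r (A : smat) (a b c : R) (j k : nat) :
  smat_mul A (Dmat a b c) j k =
  (match k with O => 0 | S k' => A j k' * dcoef a b c k' end) - A j (S k) * dcoef a b c k.
Proof.
  unfold smat_mul, Dmat. destruct k as [|k].
  - rewrite (Series_two_points _ 1 0 (- (A j 1%nat * dcoef a b c 0)) 0); [ring|].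
    intros l. destruct (Nat.eqb_spec 0 (S l)), (Nat.eqb_spec l 1), (Nat.eqb_spec l 0);
      subst; try lia; ring.
  - rewrite (Series_two_points _ k (S (S k)) (A j k * dcoef a b c k)
      (- (A j (S (S k)) * dcoef a b c (S k)))); [ring|].
    intros l. destruct (Nat.eqb_spec (S k) (S l)), (Nat.eqb_spec l (S (S k))),
      (Nat.eqb_spec l k); subst; try lia; ring.
Qed.

Lemma smat_mul_Dmat_l (A : smat) (a b c : R) (j k : nat) :
  smat_mul (Dmat a b c) A j k =
  dcoef a b c j * A (S j) k - (match j with O => 0 | S j' => dcoef a b c j' * A j' k end).
Proof.
  unfold smat_mul, Dmat. destruct j as [|j].
  - rewrite (Series_two_points _ 1 0 (dcoef a b c 0 * A 1%nat k) 0); [ring|].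
    intros l. destruct (Nat.eqb_spec l 1), (Nat.eqb_spec 0 (S l)), (Nat.eqb_spec l 0);
      subst; try lia; ring.
  - rewrite (Series_two_points _ (S (S j)) j (dcoef a b c (S j) * A (S (S j)) k)
      (- (dcoef a b c j * A j k))); [ring|].
    intros l. destruct (Nat.eqb_spec l (S (S j))), (Nat.eqb_spec (S j) (S l)),
      (Nat.eqb_spec l j); subst; try lia; ring.
Qed.

Lemma smat_mul_sym_antisym (A D : smat) (j k : nat) :
  (forall j k, A j k = A k j) -> (forall j k, D j k = - D k j) ->
  smat_mul A D j k = - smat_mul D A k j.
Proof.
  intros HA HD. unfold smat_mul. rewrite <- Series_opp.
  apply Series_ext. intros l. rewrite HA, HD. ring.
Qed.

Lemma Dmat_antisym (a b c : R) (j k : nat) : Dmat a b c j k = - Dmat a b c k j.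
Proof.
  unfold Dmat.
  destruct (Nat.eqb_spec k (S j)), (Nat.eqb_spec j (S k)); try lia; ring.
Qed.

Lemma Bmat_sym (a b c : R) (m n : nat) : Bmat a b c m n = Bmat a b c n m.
Proof.
  unfold Bmat. rewrite (Rplus_comm (INR m) (INR n)). do 2 f_equal.
  unfold Rdiv. f_equal; [ring|f_equal; ring].
Qed.

Lemma Amat_sym (a b c : R) (j k : nat) : Amat a b c j k = Amat a b c k j.
Proof.
  unfold Amat. rewrite (Bool.andb_comm (Nat.even j)), (Bool.andb_comm (Nat.odd j)).
  destruct (Nat.even k && Nat.even j), (Nat.odd k && Nat.odd j); auto using Bmat_sym.
Qed.

Lemma Amat_parity_mismatch (a b c : R) (j k : nat) :
  Nat.even j <> Nat.even k -> Amat a b c j k = 0.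
Proof.
  intros H. unfold Amat. rewrite <- !Nat.negb_even.
  destruct (Nat.even j), (Nat.even k); easy.
Qed.

Lemma Amat_even (a b c : R) (m n : nat) : Amat a b c (2 * m)%nat (2 * n)%nat = Bmat a b c m n.
Proof. unfold Amat. now rewrite !Nat.even_even, !Nat.div2_double. Qed.

Lemma Amat_odd (a b c : R) (m n : nat) :
  Amat a b c (S (2 * m)%nat) (S (2 * n)%nat) = Bmat (a + 1) (b + 1) c m n.
Proof.
  unfold Amat.
  now rewrite !Nat.even_succ, !Nat.odd_succ, !Nat.odd_even, !Nat.even_even,
    !Nat.div2_succ_double.
Qed.

Lemma dcoef_even (a b c : R) (m : nat) :
  dcoef a b c (2 * m)%nat = sqrt ((INR m + a) * (INR m + b)).
Proof. unfold dcoef. now rewrite Nat.even_even, Nat.div2_double. Qed.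

Lemma dcoef_odd (a b c : R) (m : nat) :
  dcoef a b c (S (2 * m)%nat) = sqrt ((INR m + 1) * (INR m + c)).
Proof. unfold dcoef. now rewrite Nat.even_succ, Nat.odd_even, Nat.div2_succ_double. Qed.

(** * Contiguity relations for [B] *)

Lemma sqrt_mul_sqrt_eq (u v w z : R) :
  0 <= u -> 0 <= v -> 0 <= w -> 0 <= z -> u * v = w ^ 2 * z -> sqrt u * sqrt v = w * sqrt z.
Proof.
  intros Hu Hv Hw Hz E.
  rewrite <- sqrt_mult, E, sqrt_mult, sqrt_pow2 by (auto; apply pow_le; exact Hw).
  reflexivity.
Qed.

Definition hankel_part (a b c s : R) : R := Gamma (s + a) / Gamma (s + b + c).

Definition weight (a b c : R) (n : nat) : R :=
  Gamma (INR n + b) * Gamma (INR n + c) / (Gamma (INR n + a) * INR (fact n)).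

Lemma Bmat_hankel_weight (a b c : R) (m n : nat) :
  Bmat a b c m n = hankel_part a b c (INR m + INR n) * sqrt (weight a b c m * weight a b c n).
Proof.
  unfold Bmat, hankel_part, weight. do 2 f_equal.
  unfold Rdiv. rewrite !Rinv_mult. ring.
Qed.

Lemma hankel_part_shift (a b c s : R) :
  hankel_part (a + 1) (b + 1) c s = hankel_part a b c (s + 1).
Proof. unfold hankel_part. f_equal; f_equal; ring. Qed.

Ltac pos_rational := repeat (apply Rdiv_lt_0_compat || apply Rmult_lt_0_compat); lra.
Ltac nonneg_rational := apply Rlt_le; pos_rational.

Section Contiguity.

Variables a b c : R.
Hypotheses (a_pos : 0 < a) (b_pos : 0 < b) (c_pos : 0 < c).

Lemma hankel_part_succ (s : R) :
  0 <= s -> hankel_part a b c (s + 1) = (s + a) / (s + b + c) * hankel_part a b c s.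
Proof.
  intros Hs. unfold hankel_part.
  replace (s + 1 + a) with (s + a + 1) by ring.
  replace (s + 1 + b + c) with (s + b + c + 1) by ring.
  rewrite !Gamma_succ by lra.
  unfold Rdiv. rewrite Rinv_mult. ring.
Qed.

Lemma weight_succ (n : nat) :
  weight a b c (S n) =
  (INR n + b) * (INR n + c) / ((INR n + a) * (INR n + 1)) * weight a b c n.
Proof.
  pose proof (pos_INR n). unfold weight. rewrite S_INR.
  replace (INR n + 1 + a) with (INR n + a + 1) by ring.
  replace (INR n + 1 + b) with (INR n + b + 1) by ring.
  replace (INR n + 1 + c) with (INR n + c + 1) by ring.
  rewrite !Gamma_succ by lra. rewrite fact_simpl, mult_INR, S_INR.
  unfold Rdiv. rewrite !Rinv_mult. ring.
Qed.

Lemma weight_shift (n : nat) :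
  weight (a + 1) (b + 1) c n = (INR n + b) / (INR n + a) * weight a b c n.
Proof.
  pose proof (pos_INR n). unfold weight.
  replace (INR n + (a + 1)) with (INR n + a + 1) by ring.
  replace (INR n + (b + 1)) with (INR n + b + 1) by ring.
  rewrite !Gamma_succ by lra.
  unfold Rdiv. rewrite !Rinv_mult. ring.
Qed.

Lemma Bmat_succ_r (m n : nat) :
  Bmat a b c m (S n) * sqrt ((INR n + 1) * (INR n + c)) =
  (INR m + INR n + a) / (INR m + INR n + b + c) * ((INR n + c) / (INR n + a)) *
  (Bmat a b c m n * sqrt ((INR n + a) * (INR n + b))).
Proof.
  pose proof (pos_INR m). pose proof (pos_INR n).
  rewrite !Bmat_hankel_weight, weight_succ, S_INR.
  replace (INR m + (INR n + 1)) with (INR m + INR n + 1) by ring.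
  rewrite hankel_part_succ by lra.
  set (q := (INR n + b) * (INR n + c) / ((INR n + a) * (INR n + 1))).
  replace (weight a b c m * (q * weight a b c n)) with (q * (weight a b c m * weight a b c n))
    by ring.
  rewrite (sqrt_mult_alt q) by (unfold q; nonneg_rational).
  assert (E : sqrt q * sqrt ((INR n + 1) * (INR n + c)) =
              (INR n + c) / (INR n + a) * sqrt ((INR n + a) * (INR n + b))).
  { apply sqrt_mul_sqrt_eq; unfold q; try nonneg_rational. field. lra. }
  set (sw := sqrt (weight a b c m * weight a b c n)).
  transitivity ((INR m + INR n + a) / (INR m + INR n + b + c) *
    hankel_part a b c (INR m + INR n) * sw * (sqrt q * sqrt ((INR n + 1) * (INR n + c))));
    [ring | rewrite E; ring].
Qed.

Lemma Bmat_shift_diag (m n : nat) :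
  sqrt ((INR m + a) * (INR m + b)) * Bmat (a + 1) (b + 1) c m n =
  (INR m + INR n + a) / (INR m + INR n + b + c) * ((INR m + b) / (INR n + a)) *
  (Bmat a b c m n * sqrt ((INR n + a) * (INR n + b))).
Proof.
  pose proof (pos_INR m). pose proof (pos_INR n).
  rewrite !Bmat_hankel_weight, hankel_part_shift, hankel_part_succ, !weight_shift by lra.
  set (q := (INR m + b) / (INR m + a) * ((INR n + b) / (INR n + a))).
  replace ((INR m + b) / (INR m + a) * weight a b c m *
           ((INR n + b) / (INR n + a) * weight a b c n))
    with (q * (weight a b c m * weight a b c n)) by (unfold q; ring).
  rewrite (sqrt_mult_alt q) by (unfold q; nonneg_rational).
  assert (E : sqrt ((INR m + a) * (INR m + b)) * sqrt q =
              (INR m + b) / (INR n + a) * sqrt ((INR n + a) * (INR n + b))).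
  { apply sqrt_mul_sqrt_eq; unfold q; try nonneg_rational. field. lra. }
  set (sw := sqrt (weight a b c m * weight a b c n)).
  transitivity ((INR m + INR n + a) / (INR m + INR n + b + c) *
    hankel_part a b c (INR m + INR n) * sw * (sqrt ((INR m + a) * (INR m + b)) * sqrt q));
    [ring | rewrite E; ring].
Qed.

Lemma Bmat_shift_pred (m n : nat) :
  sqrt ((INR m + 1) * (INR m + c)) * Bmat (a + 1) (b + 1) c m n =
  (INR m + 1) / (INR n + a) * (Bmat a b c (S m) n * sqrt ((INR n + a) * (INR n + b))).
Proof.
  pose proof (pos_INR m). pose proof (pos_INR n).
  rewrite !Bmat_hankel_weight, hankel_part_shift, !weight_shift, weight_succ, S_INR.
  replace (INR m + 1 + INR n) with (INR m + INR n + 1) by ring.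
  set (q := (INR m + b) / (INR m + a) * ((INR n + b) / (INR n + a))).
  set (q' := (INR m + b) * (INR m + c) / ((INR m + a) * (INR m + 1))).
  replace ((INR m + b) / (INR m + a) * weight a b c m *
           ((INR n + b) / (INR n + a) * weight a b c n))
    with (q * (weight a b c m * weight a b c n)) by (unfold q; ring).
  replace (q' * weight a b c m * weight a b c n)
    with (q' * (weight a b c m * weight a b c n)) by ring.
  rewrite (sqrt_mult_alt q), (sqrt_mult_alt q') by (unfold q, q'; nonneg_rational).
  assert (E : sqrt ((INR m + 1) * (INR m + c)) * sqrt q =
              (INR m + 1) / (INR n + a) * (sqrt q' * sqrt ((INR n + a) * (INR n + b)))).
  { rewrite <- (sqrt_mult q') by (unfold q'; nonneg_rational).
    apply sqrt_mul_sqrt_eq; unfold q, q'; try nonneg_rational. field. lra. }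
  set (sw := sqrt (weight a b c m * weight a b c n)).
  transitivity (hankel_part a b c (INR m + INR n + 1) * sw *
    (sqrt ((INR m + 1) * (INR m + c)) * sqrt q)); [ring | rewrite E; ring].
Qed.

(* Every term is a multiple of [B(m,n) d(2n)], with multipliers [1], [r (n+c)/(n+a)],
   [r (m+b)/(n+a)] and [m/(n+a)] where [r = (m+n+a)/(m+n+b+c)]; they cancel since
   [n + a + m = r (m + n + b + c)]. *)
Lemma Bmat_three_term (m n : nat) :
  Bmat a b c m n * sqrt ((INR n + a) * (INR n + b)) -
  Bmat a b c m (S n) * sqrt ((INR n + 1) * (INR n + c)) =
  sqrt ((INR m + a) * (INR m + b)) * Bmat (a + 1) (b + 1) c m n -
  match m with
  | O => 0
  | S m' => sqrt ((INR m' + 1) * (INR m' + c)) * Bmat (a + 1) (b + 1) c m' n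
  end.
Proof.
  pose proof (pos_INR m). pose proof (pos_INR n).
  rewrite Bmat_succ_r, Bmat_shift_diag.
  destruct m as [|m].
  - rewrite INR_0 in *. field. lra.
  - rewrite Bmat_shift_pred, S_INR. rewrite S_INR in *. field. lra.
Qed.

End Contiguity.

Lemma smat_mul_Amat_Dmat_same_parity (a b c : R) (j k : nat) :
  Nat.even j = Nat.even k -> smat_mul (Amat a b c) (Dmat a b c) j k = 0.
Proof.
  intros E. rewrite smat_mul_Dmat_r.
  rewrite (Amat_parity_mismatch a b c j (S k))
    by (rewrite Nat.even_succ, <- Nat.negb_even, E; now destruct (Nat.even k)).
  destruct k as [|k]; [ring|].
  rewrite (Amat_parity_mismatch a b c j k)
    by (rewrite E, Nat.even_succ, <- Nat.negb_even; now destruct (Nat.even k)).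
  ring.
Qed.

Lemma smat_mul_Dmat_Amat_same_parity (a b c : R) (j k : nat) :
  Nat.even j = Nat.even k -> smat_mul (Dmat a b c) (Amat a b c) j k = 0.
Proof.
  intros E.
  assert (H := smat_mul_sym_antisym _ _ k j (Amat_sym a b c) (Dmat_antisym a b c)).
  rewrite smat_mul_Amat_Dmat_same_parity in H by easy. lra.
Qed.

Lemma smat_mul_Amat_Dmat_even_odd (a b c : R) (m n : nat) :
  0 < a -> 0 < b -> 0 < c ->
  smat_mul (Amat a b c) (Dmat a b c) (2 * m)%nat (S (2 * n)) =
  smat_mul (Dmat a b c) (Amat a b c) (2 * m)%nat (S (2 * n)).
Proof.
  intros ha hb hc. rewrite smat_mul_Dmat_r, smat_mul_Dmat_l.
  replace (S (S (2 * n)))%nat with (2 * S n)%nat by lia.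
  rewrite !Amat_even, Amat_odd, !dcoef_even, dcoef_odd.
  rewrite (Bmat_three_term a b c ha hb hc m n).
  destruct m as [|m]; [reflexivity|].
  replace (2 * S m)%nat with (S (S (2 * m))) by lia.
  now rewrite dcoef_odd, Amat_odd.
Qed.

Theorem mainTheorem1 (a b c : R) (ha : 0 < a) (hb : 0 < b) (hc : 0 < c) :
  forall j k : nat,
    smat_mul (Amat a b c) (Dmat a b c) j k = smat_mul (Dmat a b c) (Amat a b c) j k.
Proof.
  assert (transpose : forall j k, smat_mul (Amat a b c) (Dmat a b c) j k =
                                  - smat_mul (Dmat a b c) (Amat a b c) k j).
  { intros j k. apply smat_mul_sym_antisym; [apply Amat_sym | apply Dmat_antisym]. }
  intros j k.
  destruct (Nat.Even_or_Odd j) as [[m ->]|[m ->]], (Nat.Even_or_Odd k) as [[n ->]|[n ->]];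
    rewrite ?Nat.add_1_r.
  - rewrite smat_mul_Amat_Dmat_same_parity, smat_mul_Dmat_Amat_same_parity;
      [reflexivity | now rewrite !Nat.even_even ..].
  - now apply smat_mul_Amat_Dmat_even_odd.
  - rewrite transpose, <- smat_mul_Amat_Dmat_even_odd, transpose by assumption. ring.
  - rewrite smat_mul_Amat_Dmat_same_parity, smat_mul_Dmat_Amat_same_parity;
      [reflexivity | now rewrite !Nat.even_succ, !Nat.odd_even ..].
Qed.
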